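(* Let $\boldsymbol{\mathcal{D}} = \begin{pmatrix}\boldsymbol{W}_p\\ \boldsymbol{U}_f \\ \boldsymbol{Y}_f\end{pmatrix}$ be a data matrix with full row rank and LQ decomposition as described in the context, let $\boldsymbol{Z}:=\begin{pmatrix}\boldsymbol{W}_p\\ \boldsymbol{U}_f\end{pmatrix}$, $\boldsymbol{\Pi}:=\boldsymbol{Z}^+\boldsymbol{Z}$, $\boldsymbol{\Pi}_\perp:=\boldsymbol{I}-\boldsymbol{\Pi}$, and $\lambda_a>0$. Then $\boldsymbol{\gamma}$-DDPC with regularization $\tilde h(\boldsymbol{\gamma}) = \lambda_a \|\boldsymbol{\gamma}_2\|_2^2$ and the additional constraint $\boldsymbol{\gamma}_3 = \boldsymbol{0}$ is equivalent to DeePC with regularization $h(\boldsymbol{a}) = \lambda_a \|\boldsymbol{\Pi}\boldsymbol{a}\|_2^2$ (or, alternatively, $h(\boldsymbol{a}) = \lambda_a \|\boldsymbol{a}\|_2^2$) and the additional constraint $\boldsymbol{\Pi}_\perp \boldsymbol{a} = \boldsymbol{0}$. Furthermore, both schemes are equivalent to SPC with the additional regularization $h^\ast(\boldsymbol{\xi}, \mathbf{u}_f, \mathbf{y}_f) = \lambda_a \|\mathbf{u}_f-\boldsymbol{U}_f \boldsymbol{W}_p^+\boldsymbol{\xi}\|_{\boldsymbol{\mathcal{R}}_\text{reg}}^2$, where $\boldsymbol{\mathcal{R}}_\text{reg} :=\left(\boldsymbol{U}_f\left(\boldsymbol{I}-\boldsymbol{W}_p^+\boldsymbol{W}_p\r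ight)\boldsymbol{U}_f^\top\right)^{-1}$.
   Context: $\boldsymbol{M}^+$ denotes the Moore–Penrose pseudoinverse and $\|\boldsymbol{x}\|_{\boldsymbol{M}}^2 := \boldsymbol{x}^\top\boldsymbol{M}\boldsymbol{x}$. Data: $m$ inputs, $p$ outputs, past horizon $N_p$, future horizon $N_f$, $L=N_p+N_f$, and $\ell$ data trajectories. The data matrix $\boldsymbol{\mathcal{D}}\in\mathbb{R}^{L(m+p)\times\ell}$ has blocks $\boldsymbol{W}_p\in\mathbb{R}^{N_p(m+p)\times\ell}$ (past inputs and outputs), $\boldsymbol{U}_f\in\mathbb{R}^{mN_f\times \ell}$, $\boldsymbol{Y}_f\in\mathbb{R}^{pN_f\times\ell}$ and is assumed to have full row rank. Its LQ decomposition is $\boldsymbol{\mathcal{D}} = \begin{pmatrix} \boldsymbol{L}_{11} & \boldsymbol{0} & \boldsymbol{0} & \boldsymbol{0} \\ \boldsymbol{L}_{21} & \boldsymbol{L}_{22} & \boldsymbol{0} & \boldsymbol{0} \\ \boldsymbol{L}_{31} & \boldsymbol{L}_{32} & \boldsymbol{L}_{33} & \boldsymbol{0} \end{pmatrix}\begin{pmatrix}\boldsymbol{Q}_1\\ \boldsymbol{Q}_2\\ \boldsymbol{Q}_3\\ \boldsymbol{Q}_4\end{pmatrix}$, with non-singular square diagonal blocks $\boldsymbol{L}_{11},\boldsymbol{L}_{22},\boldsymbol{L}_{33}$ (of sizes matching $\boldsymbol{W}_p,\boldsymbol{U}_f,\boldsymbol{Y}_f$) and $\boldsymbol{Q}=\begin{pmatrix}\boldsymbol{Q}_1^\top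 & \boldsymbol{Q}_2^\top&\boldsymbol{Q}_3^\top&\boldsymbol{Q}_4^\top\end{pmatrix}^\top\in\mathbb{R}^{\ell\times\ell}$ orthogonal; $\boldsymbol{\gamma}_i := \boldsymbol{Q}_i\boldsymbol{a}$. Given current past I/O data $\boldsymbol{\xi}\in\mathbb{R}^{N_p(m+p)}$, a cost $J(\boldsymbol{\xi},\mathbf{u}_f,\mathbf{y}_f)$ and constraint sets $\mathcal{U}$, $\mathcal{Y}$: DeePC with regularization $h$ is the problem $\min_{\mathbf{u}_f,\mathbf{y}_f,\boldsymbol{a}} J(\boldsymbol{\xi},\mathbf{u}_f,\mathbf{y}_f)+h(\boldsymbol{a})$ s.t. $(\boldsymbol{\xi};\mathbf{u}_f;\mathbf{y}_f)=\boldsymbol{\mathcal{D}}\boldsymbol{a}$, $(\mathbf{u}_f,\mathbf{y}_f)\in\mathcal{U}\times\mathcal{Y}$ (plus any stated additional constraint on $\boldsymbol{a}$). $\boldsymbol{\gamma}$-DDPC with regularization $\tilde h$ is the problem $\min_{\mathbf{u}_f,\mathbf{y}_f,\boldsymbol{\gamma}_2,\boldsymbol{\gamma}_3} J(\boldsymbol{\xi},\mathbf{u}_f,\mathbf{y}_f)+\tilde h(\boldsymbol{\gamma})$ s.t. $\boldsymbol{\gamma}_1=\boldsymbol{L}_{11}^{-1}\boldsymbol{\xi}$, $\mathbf{u}_f = \boldsymbol{L}_{21}\boldsymbol{\gamma}_1+\boldsymbol{L}_{22}\boldsymbol{\gamma}_2$, $\mathbf{y}_f=\boldsymbol{L}_{31}\boldsymbol{\gamma}_1+\boldsymbol{L}_{32}\boldsymbol{\gamma}_2+\boldsymbol{L}_{33}\boldsymbol{\gamma}_3$,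 $(\mathbf{u}_f,\mathbf{y}_f)\in\mathcal{U}\times\mathcal{Y}$ (i.e., $\boldsymbol{\gamma}_4=\boldsymbol{0}$ is fixed), plus any stated additional constraint on the $\boldsymbol{\gamma}_i$. SPC with additional regularization $h^\ast$ is the problem $\min_{\mathbf{u}_f,\mathbf{y}_f} J(\boldsymbol{\xi},\mathbf{u}_f,\mathbf{y}_f)+h^\ast(\boldsymbol{\xi},\mathbf{u}_f,\mathbf{y}_f)$ s.t. $\mathbf{y}_f = \boldsymbol{K}_{\text{SPC}}\begin{pmatrix}\boldsymbol{\xi}\\ \mathbf{u}_f\end{pmatrix}$, $(\mathbf{u}_f,\mathbf{y}_f)\in\mathcal{U}\times\mathcal{Y}$, where $\boldsymbol{K}_{\text{SPC}} := \boldsymbol{Y}_f\boldsymbol{Z}^+$ (the minimizer of $\|\boldsymbol{Y}_f-\boldsymbol{K}\boldsymbol{Z}\|_F^2$). Two such optimal control problems are called equivalent if, for every $\boldsymbol{\xi}$, they yield the same optimal predicted input/output trajectories $(\mathbf{u}_f^\ast,\mathbf{y}_f^\ast)$ (not necessarily the same optimal cost). *)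

From HB Require Import structures.
From mathcomp Require Import all_boot all_order all_algebra.
Set Implicit Arguments. Unset Strict Implicit. Unset Printing Implicit Defensive.
Import Order.TTheory GRing.Theory Num.Theory.
Local Open Scope ring_scope.

Section Defs.
Variable R : realFieldType.

Definition is_MP_pinv (r c : nat) (A : 'M[R]_(r, c)) (X : 'M[R]_(c, r)) : Prop :=
  [/\ A *m X *m A = A, X *m A *m X = X,
      (A *m X)^T = A *m X & (X *m A)^T = X *m A].

Definition wsqnorm (n : nat) (M : 'M[R]_n) (x : 'cV[R]_n) : R :=
  (x^T *m M *m x) ord0 ord0.
Definition sqnorm (n : nat) (x : 'cV[R]_n) : R := (x^T *m x) ord0 ord0.

Definition opt_io (nu ny : nat) (X : Type) (feas : X -> Prop) (cost : X -> R)
  (io : X -> 'cV[R]_nu * 'cV[R]_ny) (u : 'cV[R]_nu) (y : 'cV[R]_ny) : Prop :=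
  exists x, (feas x /\ forall z, feas z -> cost x <= cost z) /\ io x = (u, y).

(* Two problems are equivalent: same optimal (u_f^opt, y_f^opt) for every xi. *)
Definition equiv_ocp (np nu ny : nat)
  (P1 P2 : 'cV[R]_np -> 'cV[R]_nu -> 'cV[R]_ny -> Prop) : Prop :=
  forall xi u y, P1 xi u y <-> P2 xi u y.

Section Problems.
Variables (np nu ny ell k : nat).
Variable J : 'cV[R]_np -> 'cV[R]_nu -> 'cV[R]_ny -> R.
Variables (Uc : 'cV[R]_nu -> Prop) (Yc : 'cV[R]_ny -> Prop).

(* DeePC with regularization h and additional constraint `extra` on a.
   Decision variable: (u_f, y_f, a). *)
Definition DeePC (Wp : 'M[R]_(np, ell)) (Uf : 'M[R]_(nu, ell)) (Yf : 'M[R]_(ny, ell))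
  (h : 'cV[R]_ell -> R) (extra : 'cV[R]_ell -> Prop)
  (xi : 'cV[R]_np) (u : 'cV[R]_nu) (y : 'cV[R]_ny) : Prop :=
  opt_io
    (fun x : 'cV[R]_nu * 'cV[R]_ny * 'cV[R]_ell =>
       [/\ col_mx xi (col_mx x.1.1 x.1.2) = col_mx Wp (col_mx Uf Yf) *m x.2,
           Uc x.1.1, Yc x.1.2 & extra x.2])
    (fun x => J xi x.1.1 x.1.2 + h x.2)
    (fun x => (x.1.1, x.1.2)) u y.

(* gamma-DDPC with regularization htilde (a function of gamma_1..gamma_4,
   evaluated at gamma_4 = 0) and additional constraint `extra` on the gamma_i.
   Decision variable: (u_f, y_f, gamma_2, gamma_3); gamma_1 = L11^-1 xi. *)
Definition gDDPC (L11 : 'M[R]_np) (L21 : 'M[R]_(nu, np)) (L22 : 'M[R]_nu)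
  (L31 : 'M[R]_(ny, np)) (L32 : 'M[R]_(ny, nu)) (L33 : 'M[R]_ny)
  (htilde : 'cV[R]_np -> 'cV[R]_nu -> 'cV[R]_ny -> 'cV[R]_k -> R)
  (extra : 'cV[R]_np -> 'cV[R]_nu -> 'cV[R]_ny -> 'cV[R]_k -> Prop)
  (xi : 'cV[R]_np) (u : 'cV[R]_nu) (y : 'cV[R]_ny) : Prop :=
  let g1 := invmx L11 *m xi in
  opt_io
    (fun x : 'cV[R]_nu * 'cV[R]_ny * 'cV[R]_nu * 'cV[R]_ny =>
       [/\ x.1.1.1 = L21 *m g1 + L22 *m x.1.2,
           x.1.1.2 = L31 *m g1 + L32 *m x.1.2 + L33 *m x.2,
           Uc x.1.1.1, Yc x.1.1.2 & extra g1 x.1.2 x.2 0])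
    (fun x => J xi x.1.1.1 x.1.1.2 + htilde g1 x.1.2 x.2 0)
    (fun x => (x.1.1.1, x.1.1.2)) u y.

Definition SPC (K : 'M[R]_(ny, np + nu))
  (hstar : 'cV[R]_np -> 'cV[R]_nu -> 'cV[R]_ny -> R)
  (xi : 'cV[R]_np) (u : 'cV[R]_nu) (y : 'cV[R]_ny) : Prop :=
  opt_io
    (fun x : 'cV[R]_nu * 'cV[R]_ny =>
       [/\ x.2 = K *m col_mx xi x.1, Uc x.1 & Yc x.2])
    (fun x => J xi x.1 x.2 + hstar xi x.1 x.2)
    id u y.

Definition LQ_L (L11 : 'M[R]_np) (L21 : 'M[R]_(nu, np)) (L22 : 'M[R]_nu)
  (L31 : 'M[R]_(ny, np)) (L32 : 'M[R]_(ny, nu)) (L33 : 'M[R]_ny)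
  : 'M[R]_(np + (nu + ny), np + (nu + (ny + k))) :=
  col_mx (row_mx L11 0)
    (col_mx (row_mx L21 (row_mx L22 0))
            (row_mx L31 (row_mx L32 (row_mx L33 (0 : 'M[R]_(ny, k)))))).

End Problems.
End Defs.

From HB Require Import structures.
From mathcomp Require Import all_boot all_order all_algebra.
Set Implicit Arguments. Unset Strict Implicit. Unset Printing Implicit Defensive.
Import Order.TTheory GRing.Theory Num.Theory.
Local Open Scope ring_scope.

(* The first two row blocks Q_Z of Q are orthonormal and Z = L_Z Q_Z with
   L_Z = [L11 0; L21 L22] invertible, so Z^+ = Q_Z^T L_Z^-1 and Pi = Q_Z^T Q_Z;
   likewise W_p^+ = Q1^T L11^-1.  Hence the a with Pi_perp a = 0 are exactly
   a = Q1^T g1 + Q2^T g2, with ||a||^2 = ||g1||^2 + ||g2||^2, and the data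
   equation forces g1 = L11^-1 xi.  In these coordinates every problem has the
   feasible trajectories u_f = L21 g1 + L22 g2, y_f = L31 g1 + L32 g2, and the
   costs differ only by the constant lambda ||g1||^2: for SPC,
   u_f - U_f W_p^+ xi = L22 g2 and R_reg = (L22 L22^T)^-1. *)

Lemma opt_io_cost_shift (R : realFieldType) (nu ny : nat) (X1 X2 : Type)
  (f1 : X1 -> Prop) (c1 : X1 -> R) (io1 : X1 -> 'cV[R]_nu * 'cV[R]_ny)
  (f2 : X2 -> Prop) (c2 : X2 -> R) (io2 : X2 -> 'cV[R]_nu * 'cV[R]_ny) (c : R) :
  (forall x, f1 x -> exists z, [/\ f2 z, io2 z = io1 x & c2 z = c1 x + c]) ->
  (forall z, f2 z -> exists x, [/\ f1 x, io1 x = io2 z & c2 z = c1 x + c]) ->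
  forall u y, opt_io f1 c1 io1 u y <-> opt_io f2 c2 io2 u y.
Proof.
move=> to2 to1 u y; split.
- case=> x [[fx opt] iox]; have [z [fz ioz cz]] := to2 x fx.
  exists z; split; last by rewrite ioz.
  split=> // z' fz'; have [x' [fx' _ cz']] := to1 z' fz'.
  by rewrite cz cz' lerD2r opt.
- case=> z [[fz opt] ioz]; have [x [fx iox cz]] := to1 z fz.
  exists x; split; last by rewrite iox.
  split=> // x' fx'; have [z' [fz' _ cz']] := to2 x' fx'.
  by rewrite -(lerD2r c) -cz -cz' opt.
Qed.

Lemma MP_pinv_unique (R : realFieldType) (r c : nat)
    (A : 'M[R]_(r, c)) (X Y : 'M[R]_(c, r)) :
  is_MP_pinv A X -> is_MP_pinv A Y -> X = Y.
Proof.
case=> AXA XAX AXs XAs [AYA YAY AYs YAs].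
transitivity (X *m A *m Y).
  transitivity (X *m (A *m X)^T *m (A *m Y)^T).
    by rewrite -mulmxA -trmx_mul mulmxA AYA AXs mulmxA XAX.
  by rewrite AXs AYs !mulmxA XAX.
transitivity ((X *m A)^T *m (Y *m A)^T *m Y).
  by rewrite XAs YAs -(mulmxA (X *m A)) YAY.
by rewrite -trmx_mul -(mulmxA Y) (mulmxA A) AXA YAs YAY.
Qed.

Lemma MP_pinv_LQ (R : realFieldType) (r c : nat)
    (L : 'M[R]_r) (Q : 'M[R]_(r, c)) (X : 'M[R]_(c, r)) :
  L \in unitmx -> Q *m Q^T = 1%:M -> is_MP_pinv (L *m Q) X -> X = Q^T *m invmx L.
Proof.
move=> L_unit QQt /MP_pinv_unique; apply.
have AX : L *m Q *m (Q^T *m invmx L) = 1%:M.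
  by rewrite mulmxA -(mulmxA L) QQt mulmx1 mulmxV.
have XA : Q^T *m invmx L *m (L *m Q) = Q^T *m Q.
  by rewrite mulmxA mulmxKV.
split; rewrite ?AX ?XA ?mul1mx ?trmx1 //.
- by rewrite -mulmxA (mulmxA Q) QQt mul1mx.
- by rewrite trmx_mul trmxK.
Qed.

Lemma orthonormal_col_mx (R : realFieldType) (n1 n2 c : nat)
    (A : 'M[R]_(n1, c)) (B : 'M[R]_(n2, c)) :
  col_mx A B *m (col_mx A B)^T = 1%:M <->
  [/\ A *m A^T = 1%:M, A *m B^T = 0 & B *m B^T = 1%:M].
Proof.
rewrite tr_col_mx mul_col_row [1%:M]scalar_mx_block; split.
  by move=> /eq_block_mx [-> -> _ ->].
case=> -> AB ->.
by rewrite AB -[B *m A^T]trmxK trmx_mul trmxK AB trmx0.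
Qed.

Lemma orthonormal_col_mx3 (R : realFieldType) (n1 n2 n3 c : nat)
    (A : 'M[R]_(n1, c)) (B : 'M[R]_(n2, c)) (C : 'M[R]_(n3, c)) :
  col_mx A (col_mx B C) *m (col_mx A (col_mx B C))^T = 1%:M ->
  col_mx A B *m (col_mx A B)^T = 1%:M /\ C *m (col_mx A B)^T = 0.
Proof.
move=> /orthonormal_col_mx [AA ABC /orthonormal_col_mx [BB BC _]].
move: ABC; rewrite tr_col_mx mul_mx_row => /eqP; rewrite row_mx_eq0.
case/andP=> /eqP AB /eqP AC; split; first exact/orthonormal_col_mx.
by rewrite tr_col_mx mul_mx_row -[C]trmxK -!trmx_mul AC BC !trmx0 row_mx0.
Qed.

Lemma sqnorm_col_mx (R : realFieldType) (n1 n2 : nat)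
    (x1 : 'cV[R]_n1) (x2 : 'cV[R]_n2) :
  sqnorm (col_mx x1 x2) = sqnorm x1 + sqnorm x2.
Proof. by rewrite /sqnorm tr_col_mx mul_row_col mxE. Qed.

Lemma sqnorm_trmx_orthonormal (R : realFieldType) (r c : nat)
    (Q : 'M[R]_(r, c)) (x : 'cV[R]_r) :
  Q *m Q^T = 1%:M -> sqnorm (Q^T *m x) = sqnorm x.
Proof. by move=> QQt; rewrite /sqnorm trmx_mul trmxK mulmxA -(mulmxA _ Q) QQt mulmx1. Qed.

Lemma wsqnorm_invmx_gram (R : realFieldType) (n : nat)
    (M : 'M[R]_n) (x : 'cV[R]_n) :
  M \in unitmx -> wsqnorm (invmx (M *m M^T)) (M *m x) = sqnorm x.
Proof.
move=> M_unit; have G_unit : M *m M^T \in unitmx by rewrite unitmx_mul M_unit unitmx_tr.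
have MtGM : M^T *m invmx (M *m M^T) *m M = 1%:M.
  apply: (can_inj (mulKmx M_unit)).
  by rewrite mulmx1 !mulmxA mulmxV // mul1mx.
by rewrite /wsqnorm trmx_mul -!mulmxA (mulmxA M^T) (mulmxA (M^T *m _)) MtGM mul1mx.
Qed.

Lemma LQ_factorization_blocks (R : realFieldType) (nw nu ny k ell : nat)
  (Wp : 'M[R]_(nw, ell)) (Uf : 'M[R]_(nu, ell)) (Yf : 'M[R]_(ny, ell))
  (L11 : 'M[R]_nw) (L21 : 'M[R]_(nu, nw)) (L22 : 'M[R]_nu)
  (L31 : 'M[R]_(ny, nw)) (L32 : 'M[R]_(ny, nu)) (L33 : 'M[R]_ny)
  (Q1 : 'M[R]_(nw, ell)) (Q2 : 'M[R]_(nu, ell))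
  (Q3 : 'M[R]_(ny, ell)) (Q4 : 'M[R]_(k, ell)) :
  col_mx Wp (col_mx Uf Yf) =
    LQ_L k L11 L21 L22 L31 L32 L33 *m col_mx Q1 (col_mx Q2 (col_mx Q3 Q4)) ->
  [/\ Wp = L11 *m Q1, Uf = L21 *m Q1 + L22 *m Q2
    & Yf = L31 *m Q1 + L32 *m Q2 + L33 *m Q3].
Proof.
rewrite /LQ_L !mul_col_mx !mul_row_col !mul0mx !addr0.
by move=> /eq_col_mx [-> /eq_col_mx [-> ->]]; rewrite addrA.
Qed.

Section LQCoordinates.
Variables (R : realFieldType) (nw nu ny ell : nat).
Variables (Q1 : 'M[R]_(nw, ell)) (Q2 : 'M[R]_(nu, ell)) (Q3 : 'M[R]_(ny, ell)).
Hypothesis Q12_orth : col_mx Q1 Q2 *m (col_mx Q1 Q2)^T = 1%:M.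
Hypothesis Q3_perp : Q3 *m (col_mx Q1 Q2)^T = 0.
Variables (L11 : 'M[R]_nw) (L21 : 'M[R]_(nu, nw)) (L22 : 'M[R]_nu).
Variables (L31 : 'M[R]_(ny, nw)) (L32 : 'M[R]_(ny, nu)) (L33 : 'M[R]_ny).
Hypotheses (L11_unit : L11 \in unitmx) (L22_unit : L22 \in unitmx).
Variables (Wp : 'M[R]_(nw, ell)) (Uf : 'M[R]_(nu, ell)) (Yf : 'M[R]_(ny, ell)).
Hypotheses (Wp_LQ : Wp = L11 *m Q1) (Uf_LQ : Uf = L21 *m Q1 + L22 *m Q2).
Hypothesis Yf_LQ : Yf = L31 *m Q1 + L32 *m Q2 + L33 *m Q3.

Let Q1_orth : Q1 *m Q1^T = 1%:M.
Proof. by case: ((orthonormal_col_mx Q1 Q2).1 Q12_orth). Qed.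

Let Q12_perp : Q1 *m Q2^T = 0.
Proof. by case: ((orthonormal_col_mx Q1 Q2).1 Q12_orth). Qed.

Let Q2_orth : Q2 *m Q2^T = 1%:M.
Proof. by case: ((orthonormal_col_mx Q1 Q2).1 Q12_orth). Qed.

Let Q21_perp : Q2 *m Q1^T = 0.
Proof. by rewrite -[Q2]trmxK -trmx_mul Q12_perp trmx0. Qed.

Implicit Type a : 'cV[R]_ell.

Definition a_of_gamma (g1 : 'cV[R]_nw) (g2 : 'cV[R]_nu) : 'cV[R]_ell :=
  (col_mx Q1 Q2)^T *m col_mx g1 g2.

Lemma Q12_a_of_gamma (g1 : 'cV[R]_nw) (g2 : 'cV[R]_nu) :
  col_mx Q1 Q2 *m a_of_gamma g1 g2 = col_mx g1 g2.
Proof. by rewrite mulmxA Q12_orth mul1mx. Qed.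

Lemma Q1_a_of_gamma (g1 : 'cV[R]_nw) (g2 : 'cV[R]_nu) :
  Q1 *m a_of_gamma g1 g2 = g1.
Proof. by have := Q12_a_of_gamma g1 g2; rewrite mul_col_mx => /eq_col_mx[]. Qed.

Lemma Q2_a_of_gamma (g1 : 'cV[R]_nw) (g2 : 'cV[R]_nu) :
  Q2 *m a_of_gamma g1 g2 = g2.
Proof. by have := Q12_a_of_gamma g1 g2; rewrite mul_col_mx => /eq_col_mx[]. Qed.

Lemma Q3_a_of_gamma (g1 : 'cV[R]_nw) (g2 : 'cV[R]_nu) :
  Q3 *m a_of_gamma g1 g2 = 0.
Proof. by rewrite mulmxA Q3_perp mul0mx. Qed.

Lemma Wp_a_of_gamma (g1 : 'cV[R]_nw) (g2 : 'cV[R]_nu) :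
  Wp *m a_of_gamma g1 g2 = L11 *m g1.
Proof. by rewrite Wp_LQ -mulmxA Q1_a_of_gamma. Qed.

Lemma Uf_a_of_gamma (g1 : 'cV[R]_nw) (g2 : 'cV[R]_nu) :
  Uf *m a_of_gamma g1 g2 = L21 *m g1 + L22 *m g2.
Proof. by rewrite Uf_LQ mulmxDl -!mulmxA Q1_a_of_gamma Q2_a_of_gamma. Qed.

Lemma Yf_a_of_gamma (g1 : 'cV[R]_nw) (g2 : 'cV[R]_nu) :
  Yf *m a_of_gamma g1 g2 = L31 *m g1 + L32 *m g2.
Proof.
by rewrite Yf_LQ !mulmxDl -!mulmxA Q1_a_of_gamma Q2_a_of_gamma Q3_a_of_gamma mulmx0 addr0.
Qed.

Lemma sqnorm_a_of_gamma (g1 : 'cV[R]_nw) (g2 : 'cV[R]_nu) :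
  sqnorm (a_of_gamma g1 g2) = sqnorm g1 + sqnorm g2.
Proof. by rewrite sqnorm_trmx_orthonormal // sqnorm_col_mx. Qed.

Lemma Z_LQ : col_mx Wp Uf = block_mx L11 0 L21 L22 *m col_mx Q1 Q2.
Proof. by rewrite mul_block_col mul0mx addr0 -Wp_LQ -Uf_LQ. Qed.

Lemma L_Z_unit : block_mx L11 0 L21 L22 \in unitmx.
Proof. by rewrite unitmxE det_lblock unitrM -!unitmxE L11_unit L22_unit. Qed.

Variables (Zpinv : 'M[R]_(ell, nw + nu)) (Wppinv : 'M[R]_(ell, nw)).
Hypothesis Zpinv_MP : is_MP_pinv (col_mx Wp Uf) Zpinv.
Hypothesis Wppinv_MP : is_MP_pinv Wp Wppinv.

Lemma Pi_LQ : Zpinv *m col_mx Wp Uf = (col_mx Q1 Q2)^T *m col_mx Q1 Q2.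
Proof.
move: Zpinv_MP; rewrite Z_LQ => /(MP_pinv_LQ L_Z_unit Q12_orth) ->.
by rewrite mulmxA mulmxKV ?L_Z_unit.
Qed.

Lemma Pi_mulmx a : Zpinv *m col_mx Wp Uf *m a = a_of_gamma (Q1 *m a) (Q2 *m a).
Proof. by rewrite Pi_LQ -mulmxA mul_col_mx. Qed.

Lemma Pi_a_of_gamma (g1 : 'cV[R]_nw) (g2 : 'cV[R]_nu) :
  Zpinv *m col_mx Wp Uf *m a_of_gamma g1 g2 = a_of_gamma g1 g2.
Proof. by rewrite Pi_mulmx Q1_a_of_gamma Q2_a_of_gamma. Qed.

Lemma K_SPC_LQ (xi : 'cV[R]_nw) (g2 : 'cV[R]_nu) :
  let g1 := invmx L11 *m xi in
  Yf *m Zpinv *m col_mx xi (L21 *m g1 + L22 *m g2) = L31 *m g1 + L32 *m g2.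
Proof.
move=> g1; rewrite -[X in col_mx X _](mulKVmx L11_unit xi) -/g1.
rewrite -(Wp_a_of_gamma g1 g2) -Uf_a_of_gamma -mul_col_mx -mulmxA (mulmxA Zpinv).
by rewrite Pi_a_of_gamma Yf_a_of_gamma.
Qed.

Lemma Uf_Q1t : Uf *m Q1^T = L21.
Proof. by rewrite Uf_LQ mulmxDl -!mulmxA Q1_orth Q21_perp mulmx1 mulmx0 addr0. Qed.

Lemma Uf_Q2t : Uf *m Q2^T = L22.
Proof. by rewrite Uf_LQ mulmxDl -!mulmxA Q12_perp Q2_orth mulmx1 mulmx0 add0r. Qed.

Lemma Wppinv_LQ : Wppinv = Q1^T *m invmx L11.
Proof. by move: Wppinv_MP; rewrite Wp_LQ => /(MP_pinv_LQ L11_unit Q1_orth). Qed.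

Lemma Uf_Wppinv : Uf *m Wppinv = L21 *m invmx L11.
Proof. by rewrite Wppinv_LQ mulmxA Uf_Q1t. Qed.

Lemma R_reg_LQ : Uf *m (1%:M - Wppinv *m Wp) *m Uf^T = L22 *m L22^T.
Proof.
have -> : Uf *m (1%:M - Wppinv *m Wp) = L22 *m Q2.
  rewrite mulmxBr mulmx1 mulmxA Uf_Wppinv Wp_LQ mulmxA mulmxKV //.
  by rewrite {1}Uf_LQ addrAC subrr add0r.
by rewrite -mulmxA -[Q2 *m Uf^T]trmxK trmx_mul trmxK Uf_Q2t.
Qed.

Lemma SPC_reg_LQ (xi : 'cV[R]_nw) (g2 : 'cV[R]_nu) :
  let g1 := invmx L11 *m xi in
  wsqnorm (invmx (Uf *m (1%:M - Wppinv *m Wp) *m Uf^T))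
    (L21 *m g1 + L22 *m g2 - Uf *m Wppinv *m xi) = sqnorm g2.
Proof.
by move=> g1; rewrite R_reg_LQ Uf_Wppinv -mulmxA -/g1 addrC addKr wsqnorm_invmx_gram.
Qed.

Section Problems.
Variables (k : nat) (lambda : R).
Variable J : 'cV[R]_nw -> 'cV[R]_nu -> 'cV[R]_ny -> R.
Variables (Uc : 'cV[R]_nu -> Prop) (Yc : 'cV[R]_ny -> Prop).

Let gamma_DDPC := gDDPC J Uc Yc L11 L21 L22 L31 L32 L33
  (fun g1 g2 g3 (g4 : 'cV[R]_k) => lambda * sqnorm g2)
  (fun g1 g2 g3 (g4 : 'cV[R]_k) => g3 = 0).

Lemma gamma_DDPC_equiv_DeePC (h : 'cV[R]_ell -> R) :
  (forall a, Zpinv *m col_mx Wp Uf *m a = a -> h a = lambda * sqnorm a) ->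
  equiv_ocp gamma_DDPC
    (DeePC J Uc Yc Wp Uf Yf h (fun a => (1%:M - Zpinv *m col_mx Wp Uf) *m a = 0)).
Proof.
move=> hE xi u y; apply: (opt_io_cost_shift (c := lambda * sqnorm (invmx L11 *m xi))).
- case=> [[[u' y'] g2] g3] /= [u_E y_E Uc_u Yc_y g3_0].
  set g1 := invmx L11 *m xi; exists (u', y', a_of_gamma g1 g2); split=> //=.
    split=> //.
      rewrite !mul_col_mx Wp_a_of_gamma Uf_a_of_gamma Yf_a_of_gamma mulKVmx //.
      by rewrite u_E y_E g3_0 mulmx0 addr0.
    by rewrite mulmxBl mul1mx Pi_a_of_gamma subrr.
  by rewrite hE ?Pi_a_of_gamma // sqnorm_a_of_gamma mulrDr addrA addrAC.
- case=> [[u' y'] a] /= [Da Uc_u Yc_y /eqP].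
  rewrite mulmxBl mul1mx subr_eq0 => /eqP Pi_a.
  have [g1 [g2 a_E]] : exists (g1 : 'cV[R]_nw) (g2 : 'cV[R]_nu), a = a_of_gamma g1 g2.
    by exists (Q1 *m a), (Q2 *m a); rewrite -Pi_mulmx.
  move: Da Uc_u Yc_y.
  rewrite a_E !mul_col_mx Wp_a_of_gamma Uf_a_of_gamma Yf_a_of_gamma.
  move=> /eq_col_mx [-> /eq_col_mx [-> ->]] Uc_u Yc_y; rewrite mulKmx //.
  exists (L21 *m g1 + L22 *m g2, L31 *m g1 + L32 *m g2, g2, 0).
  split=> //; first by split=> //; rewrite mulmx0 addr0.
  by rewrite hE -a_E // a_E sqnorm_a_of_gamma mulrDr addrA addrAC.
Qed.

Lemma gamma_DDPC_equiv_SPC :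
  equiv_ocp gamma_DDPC
    (SPC J Uc Yc (Yf *m Zpinv) (fun xi u y =>
       lambda * wsqnorm (invmx (Uf *m (1%:M - Wppinv *m Wp) *m Uf^T))
                        (u - Uf *m Wppinv *m xi))).
Proof.
move=> xi u y; apply: (opt_io_cost_shift (c := 0)).
- case=> [[[u' y'] g2] g3] /= [u_E y_E Uc_u Yc_y g3_0].
  exists (u', y'); split=> //=.
    by split; rewrite // u_E y_E g3_0 K_SPC_LQ mulmx0 addr0.
  by rewrite u_E SPC_reg_LQ addr0.
- case=> [u' y'] /= [-> Uc_u Yc_y].
  have [g2 u_E] : exists g2, u' = L21 *m (invmx L11 *m xi) + L22 *m g2.
    exists (invmx L22 *m (u' - L21 *m (invmx L11 *m xi))).
    by rewrite mulKVmx // addrC subrK.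
  exists (u', Yf *m Zpinv *m col_mx xi u', g2, 0); split=> //=.
    by split; rewrite // u_E K_SPC_LQ mulmx0 addr0.
  by rewrite u_E SPC_reg_LQ addr0.
Qed.

End Problems.
End LQCoordinates.

Theorem proposition6 (R : realFieldType) (m p Np Nf ell k : nat)
  (Wp : 'M[R]_(Np * (m + p), ell)) (Uf : 'M[R]_(m * Nf, ell))
  (Yf : 'M[R]_(p * Nf, ell))
  (L11 : 'M[R]_(Np * (m + p))) (L21 : 'M[R]_(m * Nf, Np * (m + p)))
  (L22 : 'M[R]_(m * Nf)) (L31 : 'M[R]_(p * Nf, Np * (m + p)))
  (L32 : 'M[R]_(p * Nf, m * Nf)) (L33 : 'M[R]_(p * Nf))
  (Q1 : 'M[R]_(Np * (m + p), ell)) (Q2 : 'M[R]_(m * Nf, ell))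
  (Q3 : 'M[R]_(p * Nf, ell)) (Q4 : 'M[R]_(k, ell))
  (Zpinv : 'M[R]_(ell, Np * (m + p) + m * Nf)) (Wppinv : 'M[R]_(ell, Np * (m + p)))
  (lambda_a : R)
  (J : 'cV[R]_(Np * (m + p)) -> 'cV[R]_(m * Nf) -> 'cV[R]_(p * Nf) -> R)
  (Uc : 'cV[R]_(m * Nf) -> Prop) (Yc : 'cV[R]_(p * Nf) -> Prop) :
  let D := col_mx Wp (col_mx Uf Yf) in
  let Q := col_mx Q1 (col_mx Q2 (col_mx Q3 Q4)) in
  row_free D ->
  L11 \in unitmx -> L22 \in unitmx -> L33 \in unitmx ->
  Q *m Q^T = 1%:M -> Q^T *m Q = 1%:M ->
  D = LQ_L k L11 L21 L22 L31 L32 L33 *m Q ->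
  let Z := col_mx Wp Uf in
  is_MP_pinv Z Zpinv -> is_MP_pinv Wp Wppinv ->
  0 < lambda_a ->
  let Pi := Zpinv *m Z in
  let Pi_perp := 1%:M - Pi in
  let K_SPC := Yf *m Zpinv in
  let R_reg := invmx (Uf *m (1%:M - Wppinv *m Wp) *m Uf^T) in
  let gamma_DDPC :=
    gDDPC J Uc Yc L11 L21 L22 L31 L32 L33
      (fun g1 g2 g3 (g4 : 'cV[R]_k) => lambda_a * sqnorm g2)
      (fun g1 g2 g3 (g4 : 'cV[R]_k) => g3 = 0) in
  equiv_ocp gamma_DDPC
    (DeePC J Uc Yc Wp Uf Yf (fun a => lambda_a * sqnorm (Pi *m a))
       (fun a => Pi_perp *m a = 0))
  /\ equiv_ocp gamma_DDPC
    (DeePC J Uc Yc Wp Uf Yf (fun a => lambda_a * sqnorm a)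
       (fun a => Pi_perp *m a = 0))
  /\ equiv_ocp gamma_DDPC
    (SPC J Uc Yc K_SPC
       (fun xi u y => lambda_a * wsqnorm R_reg (u - Uf *m Wppinv *m xi))).
Proof.
move=> D Q _ L11_unit L22_unit _ QQt _ LQ Z Zpinv_MP Wppinv_MP _.
move=> Pi Pi_perp K_SPC R_reg gamma_DDPC.
have [Wp_LQ Uf_LQ Yf_LQ] := LQ_factorization_blocks LQ.
have [Q12_orth] := orthonormal_col_mx3 QQt.
rewrite mul_col_mx => /eqP; rewrite col_mx_eq0 => /andP[/eqP Q3_perp _].
have DeePC_equiv := gamma_DDPC_equiv_DeePC Q12_orth Q3_perp L11_unit L22_unit
  Wp_LQ Uf_LQ Yf_LQ Zpinv_MP.
split; first by apply: DeePC_equiv => a ->.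
split; first exact: DeePC_equiv.
exact (gamma_DDPC_equiv_SPC Q12_orth Q3_perp L11_unit L22_unit
  Wp_LQ Uf_LQ Yf_LQ Zpinv_MP Wppinv_MP k lambda_a J Uc Yc).
Qed.
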